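(* Let $Q$ be a QNP and let $P'=T_D(Q)$ be its direct translation. If $\pi$ solves $Q$ and $\bar\tau=\bar s_0,\bar s_1,\dots$ is an infinite $\pi$-trajectory of $P'$, then there is a variable $X$ and a recurrent state $\bar s$ of $\bar\tau$ such that $\pi(\bar s)$ is a $Dec(X)$ action and $X$ is in $stack(\bar s')$ for every recurrent state $\bar s'$ of $\bar\tau$.
   Context: QNPs: $Q=\langle F,V,I,O,G\rangle$ with propositional variables $F$, numerical variables $V$ (non-negative reals), literals $p,\neg p$, $X=0$, $X>0$; actions with precondition $Pre(a)$, propositional effects, numerical effects $N(a)\subseteq\{Inc(X),Dec(X)\}$ (at most one per variable; $Dec(X)\in N(a)$ implies $X>0\in Pre(a)$). A state assigns truth values to $F$ and reals $\ge0$ to $V$; initial states satisfy $I$ (closed world); goal states satisfy $G$; for applicable $a$, successors apply propositional effects, strictly increase $X$ for $Inc(X)$, strictly decrease $X$ for $Dec(X)$, rest unchanged. For $\epsilon>0$ an $\epsilon$-trajectory is such a sequence from an initial state where each change of a variable has magnitude $\ge\epsilon$ unless it goes from a value $<\epsilon$ to $0$. The boolean state $\bar s$ is the truth valuation on atoms $p$ and $X=0$; a policy maps states to actions depending only on the boolean state; a maximal $\pi$-trajectory is infinite without goal, ends at its first goal state, or ends where $\pi$ is undefined/inapplicable; $\pi$ solves $Q$ iff for all $\epsilon>0$ all maximal $\epsilon$-$\pi$-trajectories reach a goal state. $T_D(Q)$ is the FOND problem over $F\cup\{p_{X=0}\}$ reading $X=0$/$X>0$ as $p_{X=0}$/$\neg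 p_{X=0}$, replacing $Inc(X)$ by the deterministic effect $\neg p_{X=0}$ and $Dec(X)$ by the nondeterministic effect $\neg p_{X=0}\mid p_{X=0}$; its states are boolean states and $\pi$ acts via $\bar s\mapsto\pi(s)$. A $\pi$-trajectory of it starts at its initial state, applies $\pi$ and follows possible successors; recurrent states are those occurring infinitely often. $Dec(X)$/$Inc(X)$ actions are those coming from actions with $Dec(X)$/$Inc(X)$ in $N(a)$. The policy graph $\mathcal G$ has as nodes the states of $T_D(Q)$ reachable under $\pi$ and edges $(\bar s,\bar s')$ for $\bar s'$ a possible successor of $\bar s$ under $\pi(\bar s)$. Fix a run of the following (modified) Sieve procedure on $\mathcal G$: repeatedly compute the strongly connected components (SCCs) of the current graph, choose an SCC $C$ and a variable $X$ such that $\pi(\bar s)$ is a $Dec(X)$ action for some $\bar s\in C$, $\pi(\bar s)$ is an $Inc(X)$ action for no $\bar s\in C$, and $X$ was not chosen in an earlier iteration for a component containing the states of $C$; remove all edges $(\bar s,\bar s')$ with $\bar s,\bar s'\in C$ and $\pi(\bar s)$ a $Dec(X)$ action; stop when no such choice exists (the run is not stopped merely because the graph became acyclic). For a state $\bar s$, $stack(\bar s)$ is the sequence, in order of iterations, of the variables $X$ chosen in those iterations whose chosen component $C$ contains $\bar s$. *)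

From mathcomp Require Import all_boot.
From Stdlib Require Import Reals.
Set Implicit Arguments. Unset Strict Implicit. Unset Printing Implicit Defensive.

Inductive neff := Inc | Dec.

(** Literals on a numerical variable X are encoded by a boolean:
    [true] stands for "X = 0", [false] for "X > 0".
    Partial literal sets (preconditions, goal, propositional effects) are
    encoded as [option bool]-valued functions ([None] = not mentioned).
    The initial situation I is complete (closed world). *)
Record QNP (F V A : finType) := {
  preF : A -> F -> option bool;
  preV : A -> V -> option bool;
  effF : A -> F -> option bool;
  effV : A -> V -> option neff;          (* at most one of Inc/Dec per var *)
  initF : {ffun F -> bool};
  initV : {ffun V -> bool};
  goalF : F -> option bool;
  goalV : V -> option bool;
  dec_pre : forall a X, effV a X = Some Dec -> preV a X = Some false
}.

(** Boolean states: truth values of the atoms p and of the atoms X=0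
    (these are also the states of T_D(Q), with p_{X=0} = second component). *)
Notation BS F V := ({ffun F -> bool} * {ffun V -> bool})%type.

Section Defs.
Variables (F V A : finType) (Q : QNP F V A).

Definition lits_hold (T : finType) (l : T -> option bool) (b : {ffun T -> bool}) :=
  [forall x, if l x is Some v then b x == v else true].

Definition applicableb (a : A) (b : BS F V) : bool :=
  lits_hold (preF Q a) b.1 && lits_hold (preV Q a) b.2.

Definition goalb (b : BS F V) : bool :=
  lits_hold (goalF Q) b.1 && lits_hold (goalV Q) b.2.

Definition init_bs : BS F V := (initF Q, initV Q).

Record qstate := QState { qF : {ffun F -> bool}; qV : V -> R }.

Definition bool_of_state (s : qstate) : BS F V :=
  (qF s, [ffun X => if Req_EM_T (qV s X) 0%R then true else false]).

Definition valid_state (s : qstate) := forall X, (0 <= qV s X)%R.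

Definition qinit (s : qstate) := valid_state s /\ bool_of_state s = init_bs.

Definition qgoal (s : qstate) := goalb (bool_of_state s).

Definition qapplicable (a : A) (s : qstate) := applicableb a (bool_of_state s).

Definition qstep_eps (eps : R) (a : A) (s s' : qstate) : Prop :=
  qapplicable a s /\ valid_state s' /\
  qF s' = [ffun p => if effF Q a p is Some b then b else qF s p] /\
  (forall X,
     match effV Q a X with
     | Some Inc => (qV s X < qV s' X)%R
     | Some Dec => (qV s' X < qV s X)%R
     | None => qV s' X = qV s X
     end) /\
  (forall X, qV s' X <> qV s X ->
     (eps <= Rabs (qV s' X - qV s X))%R \/ ((qV s X < eps)%R /\ qV s' X = 0%R)).

(** A policy maps states to actions depending only on the boolean state;
    it is given by [pi : BS F V -> option A] ([None] = undefined). *)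
Variable pi : BS F V -> option A.

Definition inf_eps_traj (eps : R) (s : nat -> qstate) : Prop :=
  qinit (s 0) /\
  forall i, ~~ qgoal (s i) /\
    exists a, pi (bool_of_state (s i)) = Some a /\ qstep_eps eps a (s i) (s i.+1).

Definition stuck_eps_traj (eps : R) (n : nat) (s : nat -> qstate) : Prop :=
  qinit (s 0) /\
  (forall i, i < n -> ~~ qgoal (s i) /\
    exists a, pi (bool_of_state (s i)) = Some a /\ qstep_eps eps a (s i) (s i.+1)) /\
  ~~ qgoal (s n) /\
  (pi (bool_of_state (s n)) = None \/
   exists a, pi (bool_of_state (s n)) = Some a /\ ~~ qapplicable a (s n)).

(** pi solves Q: for every eps > 0, every maximal eps-pi-trajectory reaches a
    goal state, i.e. there is no maximal one that does not. *)
Definition solves : Prop :=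
  forall eps : R, (0 < eps)%R ->
    (forall s, ~ inf_eps_traj eps s) /\ (forall n s, ~ stuck_eps_traj eps n s).

Definition succb (a : A) (b b' : BS F V) : bool :=
  [forall p, b'.1 p == (if effF Q a p is Some v then v else b.1 p)] &&
  [forall X, match effV Q a X with
             | Some Inc => ~~ b'.2 X
             | Some Dec => true
             | None => b'.2 X == b.2 X
             end].

(** One pi-step of T_D(Q) (trajectories end at goal states). *)
Definition pistep (b b' : BS F V) : bool :=
  ~~ goalb b &&
  (if pi b is Some a then applicableb a b && succb a b b' else false).

Definition inf_traj_D (tau : nat -> BS F V) : Prop :=
  tau 0 = init_bs /\ forall i, pistep (tau i) (tau i.+1).

Definition recurrent (tau : nat -> BS F V) (b : BS F V) : Prop :=
  forall n, exists m, n <= m /\ tau m = b.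

Definition isDec (b : BS F V) (X : V) : bool :=
  if pi b is Some a then (if effV Q a X is Some Dec then true else false) else false.
Definition isInc (b : BS F V) (X : V) : bool :=
  if pi b is Some a then (if effV Q a X is Some Inc then true else false) else false.

Definition reachable (b : BS F V) : bool := connect pistep init_bs b.

Definition pgraph : rel (BS F V) := fun b b' => reachable b && pistep b b'.

Definition isSCC (E : rel (BS F V)) (C : {set BS F V}) : Prop :=
  exists u, reachable u /\ C = [set v | connect E u v && connect E v u].

Fixpoint edges_after (E : rel (BS F V)) (r : seq ({set BS F V} * V)) : rel (BS F V) :=
  match r with
  | [::] => E
  | (C, X) :: r' =>
      edges_after (fun u v => E u v && ~~ [&& u \in C, v \in C & isDec u X]) r'
  end.

Definition valid_choice (E : rel (BS F V)) (prev : seq ({set BS F V} * V))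
    (C : {set BS F V}) (X : V) : Prop :=
  isSCC E C /\
  (exists s, s \in C /\ isDec s X) /\
  (forall s, s \in C -> ~~ isInc s X) /\
  ~ (exists C', (C', X) \in prev /\ C \subset C').

(** A complete run of the modified Sieve procedure on G: the list of
    choices (C_i, X_i), each admissible at its iteration, and no admissible
    choice remains at the end. *)
Definition sieve_run (run : seq ({set BS F V} * V)) : Prop :=
  (forall pre C X post, run = pre ++ (C, X) :: post ->
     valid_choice (edges_after pgraph pre) pre C X)
  /\ (forall C X, ~ valid_choice (edges_after pgraph run) run C X).

(** X belongs to stack(b) for the run [run]: X was chosen in some iteration
    whose component contains b. *)
Definition in_stack (run : seq ({set BS F V} * V)) (b : BS F V) (X : V) : Prop :=
  exists C, (C, X) \in run /\ b \in C.

End Defs.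

From mathcomp Require Import all_boot zify.
From Stdlib Require Import Reals Lra Classical ClassicalEpsilon.
Set Implicit Arguments. Unset Strict Implicit. Unset Printing Implicit Defensive.

(* If pi solves Q, every infinite trajectory of T_D(Q) decrements some variable X
   infinitely often while eventually never incrementing it: otherwise integer values
   can be assigned to the variables, raising X at each Inc(X) high enough to absorb all
   decrements up to its next increment, which turns the trajectory into a
   non-terminating 1-trajectory of Q.
   Eventually tau only follows edges it follows infinitely often, so its recurrent
   states are strongly connected through such recurrent edges.  If the sieve kept all
   of them, a trajectory looping through the whole final component C of the recurrent
   states would provide such an X, and (C, X) would still be an admissible choice.
   So some iteration (C, X) is the first to remove a recurrent edge (x, y): then
   pi(x) is a Dec(X) action, and C, a component of a graph that still contains all
   recurrent edges, contains every recurrent state. *)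

Definition infinitely_often (T : Type) (f : nat -> T) (x : T) : Prop :=
  forall n, exists m, n <= m /\ f m = x.

Lemma eventually_forall_in (U : eqType) (P : U -> nat -> Prop) (s : seq U) :
  (forall x, exists n, forall m, n <= m -> P x m) ->
  exists N, forall x, x \in s -> forall m, N <= m -> P x m.
Proof.
move=> evP; elim: s => [|x s [N HN]]; first by exists 0.
have [n Hn] := evP x.
exists (maxn n N) => y; rewrite inE => /orP [/eqP -> | ys] m; rewrite geq_max => /andP [nm Nm].
  exact: Hn.
exact: HN.
Qed.

Lemma split_at_first_failure (U : Type) (P : seq U -> Prop) (s : seq U) :
  P [::] -> ~ P s ->
  exists pre x post, [/\ s = pre ++ x :: post, P pre & ~ P (rcons pre x)].
Proof.
move=> P0; elim/last_ind: s => [//|s x IH] notPsx.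
have [Ps | /IH [pre [y [post [-> Ppre notPy]]]]] := classic (P s).
  by exists s, x, [::]; rewrite cats1.
by exists pre, y, (rcons post x); rewrite rcons_cat.
Qed.

Section Walks.
Variable T : finType.
Implicit Types (E : rel T) (f : nat -> T).

Lemma eventually_infinitely_often f :
  exists N, forall i, N <= i -> infinitely_often f (f i).
Proof.
have ev_x (x : T) : exists n, forall m, n <= m -> f m = x -> infinitely_often f x.
  have [io | /not_all_ex_not [n late]] := classic (infinitely_often f x); first by exists 0.
  by exists n => m nm fm; case: late; exists m.
have [N HN] := eventually_forall_in (enum T) ev_x.
by exists N => i Ni; exact: HN (mem_enum _ _) i Ni erefl.
Qed.

Lemma connect_walk E f N :
  (forall i, N <= i -> E (f i) (f i.+1)) ->
  forall i j, N <= i -> i <= j -> connect E (f i) (f j).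
Proof.
move=> Ef i j Ni; elim: j => [|j IH]; first by rewrite leqn0 => /eqP ->.
rewrite leq_eqVlt => /orP [/eqP -> // | ij].
exact: connect_trans (IH ij) (connect1 (Ef j (leq_trans Ni ij))).
Qed.

Definition scc E (u : T) : {set T} := [set w | connect E u w && connect E w u].

Lemma walk_in_scc E f M :
  (forall i, M <= i -> E (f i) (f i.+1)) -> infinitely_often f (f M) ->
  forall n, M <= n -> f n \in scc E (f M).
Proof.
move=> Ef back n Mn; have [m [nm fmM]] := back n.
by rewrite inE (connect_walk Ef) //= -fmM (connect_walk Ef) // (leq_trans Mn).
Qed.

Lemma walk_through E u x (ts : seq T) :
  x \in scc E u -> {subset ts <= scc E u} ->
  exists p, [/\ path E x p, last x p = u & {subset ts <= x :: p}].
Proof.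
elim: ts x => [|t ts IH] x xC tsC.
  by move: xC; rewrite inE => /andP [_ /connectP [p Pp ->]]; exists p.
have tsC' : {subset ts <= scc E u} by move=> y yts; apply: tsC; rewrite inE yts orbT.
have [p2 [Pp2 Lp2 ts_p2]] := IH t (tsC t (mem_head _ _)) tsC'.
have /connectP [p1 Pp1 Lp1] : connect E x t.
  move: xC (tsC t (mem_head _ _)); rewrite !inE => /andP [_ xu] /andP [ut _].
  exact: connect_trans xu ut.
exists (p1 ++ p2); split; first by rewrite cat_path Pp1 -Lp1 Pp2.
  by rewrite last_cat -Lp1.
have t_in : t \in x :: p1 ++ p2 by rewrite Lp1 -cat_cons mem_cat mem_last.
move=> y; rewrite inE => /orP [/eqP -> // | /ts_p2].
by rewrite inE => /orP [/eqP -> // | yp2]; rewrite inE mem_cat yp2 !orbT.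
Qed.

Lemma closed_walk_through_scc E u v :
  E u v -> connect E v u ->
  exists c, [/\ path E u c, last u c = u, 0 < size c & {subset scc E u <= u :: c}].
Proof.
move=> Euv vu.
have vC : v \in scc E u by rewrite inE connect1.
have enumC : {subset enum (scc E u) <= scc E u} by move=> y; rewrite mem_enum.
have [p [Pp Lp sub]] := walk_through vC enumC.
exists (v :: p); split => //=; first by rewrite Euv.
by move=> w wC; rewrite inE sub ?mem_enum ?orbT.
Qed.

Definition loop (u : T) (c : seq T) (n : nat) : T := nth u (u :: c) (n %% size c).

Lemma loop_step E u c :
  path E u c -> last u c = u -> 0 < size c -> forall n, E (loop u c n) (loop u c n.+1).
Proof.
move=> Pc Lc c_gt0 n; rewrite /loop.
have i_lt : n %% size c < size c by rewrite ltn_mod.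
have -> : n.+1 %% size c = (n %% size c).+1 %% size c by rewrite -addn1 -modnDml addn1.
move/pathP: Pc => /(_ u _ i_lt).
move: i_lt; rewrite leq_eqVlt => /orP [/eqP i_last | /modn_small -> //].
rewrite i_last modnn /=.
have -> : n %% size c = (size c).-1 by lia.
by rewrite nth_last Lc.
Qed.

Lemma loop_visits u c w :
  last u c = u -> 0 < size c -> w \in u :: c -> infinitely_often (loop u c) w.
Proof.
move=> Lc c_gt0 wc n.
have i_lt : index w (u :: c) < size c.
  rewrite ltn_neqAle -ltnS index_mem wc andbT; apply/eqP => i_last.
  have : nth u (u :: c) (index w (u :: c)) = w by rewrite nth_index.
  have nth_size : nth u (u :: c) (size c) = u.
    by rewrite -[RHS]Lc; case: (c) => // x c'; rewrite -nth_last.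
  rewrite i_last nth_size => wu.
  by move: i_last; rewrite -wu /= eqxx => c0; rewrite -c0 in c_gt0.
exists (n * size c + index w (u :: c)); split.
  by apply: leq_trans (leq_addr _ _); rewrite leq_pmulr.
by rewrite /loop modnMDl modn_small // nth_index.
Qed.

Definition lasso (x0 : T) (q c : seq T) (n : nat) : T :=
  if n < size q then nth x0 (x0 :: q) n else loop (last x0 q) c (n - size q).

Lemma lasso_props (E1 E2 : rel T) x0 q u c (f := lasso x0 q c) :
  path E1 x0 q -> last x0 q = u -> path E2 u c -> last u c = u -> 0 < size c ->
  subrel E2 E1 ->
  [/\ f 0 = x0, forall n, E1 (f n) (f n.+1),
      forall n, size q <= n -> E2 (f n) (f n.+1), f (size q) = u &
      forall w, w \in u :: c -> infinitely_often f w].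
Proof.
move=> Pq Lq Pc Lc c_gt0 E21; rewrite {}/f.
have late n : size q <= n -> E2 (lasso x0 q c n) (lasso x0 q c n.+1).
  move=> qn; rewrite /lasso ltnNge qn ltnNge (leqW qn) subSn // Lq.
  exact: loop_step.
split=> //.
- by rewrite /lasso /loop; case: q {late Pq Lq} => [|y q] //=; rewrite mod0n.
- move=> n; case: (ltnP n (size q)) => [nq | /late/E21 //].
  move/pathP: Pq => /(_ x0 _ nq); rewrite /lasso nq.
  case: (ltnP n.+1 (size q)) => // qn1.
  have q_n1 : size q = n.+1 by lia.
  by rewrite q_n1 subnn /loop mod0n /= -nth_last q_n1.
- by rewrite /lasso ltnn subnn /loop mod0n Lq.
- move=> w wc n; have [m [nm <-]] := loop_visits Lc c_gt0 wc n.
  exists (m + size q); split; first exact: leq_trans nm (leq_addr _ _).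
  by rewrite /lasso ltnNge leq_addl /= addnK Lq.
Qed.
End Walks.

Lemma INR_dist_ge1 (a b : nat) : INR a <> INR b -> (1 <= Rabs (INR a - INR b))%R.
Proof.
move=> neq; have [ab | ba] : a < b \/ b < a.
- by case: (ltngtP a b) => [||ab]; [left|right|case: neq; rewrite ab].
- have /le_INR : (a.+1 <= b)%coq_nat by apply/leP.
  rewrite S_INR => ?; rewrite Rabs_left; lra.
- have /le_INR : (b.+1 <= a)%coq_nat by apply/leP.
  rewrite S_INR => ?; rewrite Rabs_right; lra.
Qed.

Section Realization.
Variables (F V A : finType) (Q : QNP F V A) (pi : BS F V -> option A).

Lemma pistep_inv b b' :
  pistep Q pi b b' ->
  exists a, [/\ ~~ goalb Q b, pi b = Some a, applicableb Q a b & succb Q a b b'].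
Proof.
by rewrite /pistep => /andP [nG]; case: (pi b) => [a /andP [app succ] | //]; exists a.
Qed.

Lemma applicable_dec_pos a b X :
  applicableb Q a b -> effV Q a X = Some Dec -> b.2 X = false.
Proof.
move=> /andP [_ /forallP /(_ X)] + /(dec_pre (q := Q)) pre.
by rewrite pre => /eqP.
Qed.

Lemma succb_var a b b' X :
  succb Q a b b' ->
  match effV Q a X with
  | Some Inc => ~~ b'.2 X
  | Some Dec => true
  | None => b'.2 X == b.2 X
  end.
Proof. by case/andP=> _ /forallP. Qed.

Section LevelFunction.
Variable sig : nat -> BS F V.
Hypothesis sig_traj : inf_traj_D Q pi sig.

Definition dec_guarded (n D : nat) (X : V) : Prop :=
  forall j, D <= j -> isDec Q pi (sig j) X -> exists2 k, n <= k <= j & isInc Q pi (sig k) X.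

Lemma dec_guarded_succ n D X :
  ~~ isInc Q pi (sig n) X -> dec_guarded n D X -> dec_guarded n.+1 D X.
Proof.
move=> noinc guard j Dj decj; have [k /andP [nk kj] inck] := guard j Dj decj.
exists k => //; rewrite kj andbT ltn_neqAle nk andbT.
by apply: contraNneq noinc => ->.
Qed.

Variable K : V -> nat -> nat.
Hypothesis K_guards : forall X i, dec_guarded i (K X i) X.

Definition effect (n : nat) (X : V) : option neff :=
  if pi (sig n) is Some a then effV Q a X else None.

(* An integer value for X along [sig]: each Inc(X) at step m raises it above
   [K X m.+1], enough to absorb every Dec(X) before the next Inc(X). *)
Fixpoint level (n : nat) (X : V) : nat :=
  match n with
  | 0 => if (sig 0).2 X then 0 else (K X 0).+1
  | m.+1 =>
      match effect m X with
      | Some Inc => level m X + (K X m.+1).+1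
      | Some Dec => if (sig m.+1).2 X then 0 else (level m X).-1
      | None => level m X
      end
  end.

Lemma level_inv n X :
  ((sig n).2 X -> level n X = 0) /\
  (~~ (sig n).2 X -> exists2 D, D - n < level n X & dec_guarded n D X).
Proof.
elim: n => [|n [IH0 IHpos]] /=.
  by case: ((sig 0).2 X) => //; split => // _; exists (K X 0); [lia | exact: K_guards].
have [a [_ pi_a app succ]] := pistep_inv (sig_traj.2 n).
have decn : isDec Q pi (sig n) X = if effV Q a X is Some Dec then true else false.
  by rewrite /isDec pi_a.
have incn : isInc Q pi (sig n) X = if effV Q a X is Some Inc then true else false.
  by rewrite /isInc pi_a.
rewrite /effect pi_a.
move: (succb_var X succ) decn incn (@applicable_dec_pos _ _ X app).
case: (effV Q a X) => [[] | ] sig_n1 decn incn pos.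
- rewrite (negbTE sig_n1); split => // _.
  by exists (K X n.+1); [lia | exact: K_guards].
- case: ((sig n.+1).2 X) => //; split => // _.
  have [D D_lt guard] := IHpos (negbT (pos erefl)).
  have nD : n < D.
    rewrite ltnNge; apply/negP => Dn; have [k /andP [nk kn]] := guard n Dn decn.
    by rewrite (_ : k = n) ?incn //; lia.
  by exists D; [lia | apply: dec_guarded_succ; rewrite ?incn].
- rewrite (eqP sig_n1); split => // pos_n; have [D D_lt guard] := IHpos pos_n.
  by exists D; [lia | apply: dec_guarded_succ; rewrite ?incn].
Qed.

Lemma level_eq0 n X : (level n X == 0) = (sig n).2 X.
Proof.
have [zero pos] := level_inv n X.
case: ((sig n).2 X) zero pos => [-> // | _ /(_ isT) [D D_lt _]].
by apply/eqP; lia.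
Qed.

Definition realized (n : nat) : qstate F V := QState (sig n).1 (fun X => INR (level n X)).

Lemma bool_of_realized n : bool_of_state (realized n) = sig n.
Proof.
rewrite /bool_of_state /= [RHS]surjective_pairing; congr pair.
apply/ffunP => X; rewrite ffunE -level_eq0.
case: Req_EM_T => [lvl0 | lvl_neq0] /=; first by rewrite (INR_eq _ 0 lvl0).
by case: eqP => // lvl0; case: lvl_neq0; rewrite lvl0.
Qed.

Lemma realized_traj : inf_eps_traj Q pi 1 realized.
Proof.
have valid n : valid_state (realized n) by move=> X; apply: pos_INR.
split; first by split; rewrite ?bool_of_realized ?sig_traj.1.
move=> i; have [a [nG pi_a app succ]] := pistep_inv (sig_traj.2 i).
rewrite /qgoal bool_of_realized; split=> //; exists a.
split; first exact: pi_a.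
split; first by rewrite /qapplicable bool_of_realized.
split; first exact: valid.
split.
  by apply/ffunP => p; rewrite ffunE; apply/eqP; case/andP: succ => /forallP.
split=> X /=; last by move=> neq; left; apply: INR_dist_ge1.
rewrite /effect pi_a; case eff: (effV Q a X) => [[] | ] //; apply: lt_INR; apply/ltP.
- lia.
- have : level i X != 0 by rewrite level_eq0 (applicable_dec_pos app eff).
  by case: ((sig i.+1).2 X); lia.
Qed.

End LevelFunction.

Lemma solves_dec_forever sig :
  solves Q pi -> inf_traj_D Q pi sig ->
  exists X i0, (forall k, i0 <= k -> ~~ isInc Q pi (sig k) X) /\
               (forall n, exists j, n <= j /\ isDec Q pi (sig j) X).
Proof.
move=> sol traj; apply: NNPP => none.
have bound (Xi : V * nat) : exists K, dec_guarded sig Xi.2 K Xi.1.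
  case: Xi => X i; rewrite /dec_guarded /=.
  have [[k [ik inck]] | noinc] := classic (exists k, i <= k /\ isInc Q pi (sig k) X).
    by exists k => j kj _; exists k; rewrite ?ik.
  have [[n nodec] | infdec] := classic (exists n, forall j, n <= j -> ~~ isDec Q pi (sig j) X).
    by exists n => j /nodec /negP.
  case: none; exists X, i; split.
    by move=> k ik; apply/negP => inck; apply: noinc; exists k.
  move=> n; apply: NNPP => nodec; apply: infdec; exists n => j nj.
  by apply/negP => decj; apply: nodec; exists j.
have [K HK] := choice _ bound.
apply: (sol 1%R Rlt_0_1).1.
exact: (realized_traj (K := fun X i => K (X, i)) traj (fun X i => HK (X, i))).
Qed.

End Realization.

Section Sieve.
Variables (F V A : finType) (Q : QNP F V A) (pi : BS F V -> option A).
Implicit Types (E : rel (BS F V)) (r : seq ({set BS F V} * V)).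

Lemma edges_after_sub E r : subrel (edges_after Q pi E r) E.
Proof. by elim: r E => [|[C X] r IH] E //= x y /IH /andP []. Qed.

Lemma edges_after_rcons E r C X x y :
  edges_after Q pi E (rcons r (C, X)) x y =
  edges_after Q pi E r x y && ~~ [&& x \in C, y \in C & isDec Q pi x X].
Proof. by elim: r E => [|[C' X'] r IH] E //=. Qed.

Lemma edges_after_removed E r C X x y :
  (C, X) \in r -> x \in C -> y \in C -> isDec Q pi x X -> ~~ edges_after Q pi E r x y.
Proof.
elim: r E => [//|[C' X'] r IH] E; rewrite inE => /orP [/eqP [<- <-] | CXr] xC yC decx /=.
  by apply/negP => /edges_after_sub /andP []; rewrite xC yC decx.
exact: IH.
Qed.

Variables (run : seq ({set BS F V} * V)) (tau : nat -> BS F V).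
Hypotheses (sieve : sieve_run Q pi run) (sol : solves Q pi) (traj : inf_traj_D Q pi tau).

Definition recurrent_edge (x y : BS F V) : Prop :=
  infinitely_often (fun i => (tau i, tau i.+1)) (x, y).

Definition keeps_recurrent_edges E : Prop := forall x y, recurrent_edge x y -> E x y.

Lemma recurrent_edge_recurrent x y : recurrent_edge x y -> recurrent tau x.
Proof. by move=> rxy n; have [m [nm [<- _]]] := rxy n; exists m. Qed.

Lemma reachable_traj n : reachable Q pi (tau n).
Proof.
by rewrite /reachable -traj.1; apply: (connect_walk (N := 0)) => // i _; apply: traj.2.
Qed.

Lemma eventually_recurrent_edges :
  exists N, forall i, N <= i -> recurrent_edge (tau i) (tau i.+1).
Proof. exact: eventually_infinitely_often (fun i => (tau i, tau i.+1)). Qed.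

Lemma pgraph_keeps_recurrent_edges : keeps_recurrent_edges (pgraph Q pi).
Proof. by move=> x y /(_ 0) [m [_ [<- <-]]]; rewrite /pgraph reachable_traj traj.2. Qed.

Lemma recurrent_connect E a b :
  keeps_recurrent_edges E -> recurrent tau a -> recurrent tau b -> connect E a b.
Proof.
move=> keep ra rb; have [N HN] := eventually_recurrent_edges.
have [m [Nm <-]] := ra N; have [m' [mm' <-]] := rb m.
by apply: (connect_walk (N := N)) => // i /HN /keep.
Qed.

Lemma sieve_cuts_recurrent_edge : ~ keeps_recurrent_edges (edges_after Q pi (pgraph Q pi) run).
Proof.
set E := edges_after Q pi _ run => keep.
have [N HN] := eventually_recurrent_edges.
have Euv : E (tau N) (tau N.+1) := keep _ _ (HN N (leqnn N)).
have rec n : N <= n -> recurrent tau (tau n) by move/HN/recurrent_edge_recurrent.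
have vu : connect E (tau N.+1) (tau N).
  exact: recurrent_connect keep (rec _ (leqnSn N)) (rec _ (leqnn N)).
have [c [Pc Lc c_gt0 sub]] := closed_walk_through_scc Euv vu.
have /connectP [q Pq Lq] := reachable_traj N.
have E_pistep : subrel E (pistep Q pi) by move=> x y /edges_after_sub /andP [].
have [sig0 sig_step sig_late sig_u sig_visits] :=
  lasso_props Pq (esym Lq) Pc Lc c_gt0 E_pistep.
set sig := lasso _ _ _ in sig0 sig_step sig_late sig_u sig_visits.
have [X [i0 [noinc infdec]]] :=
  solves_dec_forever sol (conj sig0 sig_step : inf_traj_D Q pi sig).
have in_scc n : size q <= n -> sig n \in scc E (tau N).
  by rewrite -sig_u; apply: walk_in_scc => //; rewrite sig_u; apply/sig_visits/mem_head.
have [j [qj decj]] := infdec (size q).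
apply: (sieve.2 (scc E (tau N)) X); split; [|split; [|split]].
- by exists (tau N); split; first exact: reachable_traj.
- by exists (sig j); split; first exact: in_scc.
- by move=> s /sub /sig_visits /(_ i0) [m [i0m <-]]; apply: noinc.
- case=> C' [CX' /subsetP sub'].
  have := edges_after_removed (pgraph Q pi) CX' (sub' _ (in_scc j qj))
            (sub' _ (in_scc j.+1 (leqW qj))) decj.
  by move/negP; apply; exact: sig_late.
Qed.

Lemma first_cut_of_recurrent_edge :
  exists pre C X post x y, [/\ run = pre ++ (C, X) :: post,
    keeps_recurrent_edges (edges_after Q pi (pgraph Q pi) pre), recurrent_edge x y,
    x \in C & isDec Q pi x X].
Proof.
pose keeps_after pre := keeps_recurrent_edges (edges_after Q pi (pgraph Q pi) pre).
have [pre [[C X] [post [run_eq keep_pre cut]]]] := split_at_first_failure (P := keeps_after)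
  pgraph_keeps_recurrent_edges sieve_cuts_recurrent_edge.
have [x cut_x] := not_all_ex_not _ _ cut.
have [y cut_xy] := not_all_ex_not _ _ cut_x.
have [rxy] := imply_to_and _ _ cut_xy.
rewrite edges_after_rcons keep_pre //= => /negP/negPn/and3P [xC _ decx].
by exists pre, C, X, post, x, y.
Qed.

End Sieve.

Theorem theorem14 (F V A : finType) (Q : QNP F V A) (pi : BS F V -> option A)
    (run : seq ({set BS F V} * V)) (tau : nat -> BS F V) :
  sieve_run Q pi run ->
  solves Q pi ->
  inf_traj_D Q pi tau ->
  exists (X : V) (b : BS F V),
    recurrent tau b /\ isDec Q pi b X /\
    (forall b', recurrent tau b' -> in_stack run b' X).
Proof.
move=> sieve sol traj.
have [pre [C [X [post [x [y [run_eq keep_pre rxy xC decx]]]]]]] :=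
  first_cut_of_recurrent_edge sieve sol traj.
have [[w [_ C_eq]] _] := sieve.1 _ _ _ _ run_eq.
have rx := recurrent_edge_recurrent rxy.
exists X, x; split=> //; split=> // b' rb'.
exists C; split; first by rewrite run_eq mem_cat mem_head orbT.
move: xC; rewrite C_eq !inE => /andP [wx xw].
have conn := recurrent_connect keep_pre.
by rewrite (connect_trans wx (conn _ _ rx rb')) (connect_trans (conn _ _ rb' rx) xw).
Qed.
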